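(* For every integer $k\ge1$ we have $I_k\subseteq B_k$.
   Context: Let $K$ be a field and $A$ the free associative (non-unital) $K$-algebra on free generators $x_0,x_1,x_2,\dots$, with $K$-basis of monomials; $A^1$ is $A$ with unity adjoined. For $n\ge1$, $A(n)$ is the $K$-span of monomials of length $n$, and $A(0)=K$. For a monomial $s=x_{i_1}\cdots x_{i_n}$ write $s[q]=x_{i_q}$. Let $D$ be the derivation of $A$ with $D(x_i)=x_{i+1}$. For $k\ge1$ let $\mathcal X_k=\{x_0,\dots,x_{k-1}\}$; for $n\ge1$ let $W(k,n,0)$ be the set of monomials of length $n$ all of whose letters lie in $\mathcal X_k$, $W(k,n,l+1)=\{D(w):w\in W(k,n,l)\}$, $W(k,n)=\bigcup_{t\ge0}W(k,n,t)$, and let $I_k$ be the two-sided ideal of $A$ generated by $W(k,2\cdot100^{k^2})$. $Z_k$ is the set of all elements $a\in A$ of one of the forms: (1) $a=\kappa s$, $\kappa\in K$, $s$ a monomial of length $100^{k^2}-1$ with $s[3^p\cdot100^{(k-1)^2}]=s[3^q\cdot100^{(k-1)^2}]$ for some $0\le p<q\le k$; (2) $a=\kappa(s_1+s_2)$, $\kappa\in K$, $s_1,s_2$ monomials of length $100^{k^2}-1$, with integers $0\le p<q\le k$ and $l_1>l_2\ge0$ such that $s_1$ has $x_{l_1}$ at position $3^p\cdot100^{(k-1)^2}$ and $x_{l_2}$ at position $3^q\cdot100^{(k-1)^2}$, $s_2$ has $x_{l_2}$ and $x_{l_1}$ at these positions respectively, and $s_1,s_2$ agree at all other positions. Finally $B_k=\sum_{m\ge0}A(m\cdot100^{k^2})\,Z_k\,A^1$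 (the $K$-span of products $uzv$ with $u\in A(m\cdot100^{k^2})$, $m\ge0$, $z\in Z_k$, $v\in A^1$). *)

From HB Require Import structures.
From mathcomp Require Import all_boot all_order all_algebra.
Set Implicit Arguments. Unset Strict Implicit. Unset Printing Implicit Defensive.
Import GRing.Theory.
Local Open Scope ring_scope.

(* Words (monomials) x_{i_1}...x_{i_n} are represented as seq nat [:: i_1; ...; i_n].
   Elements of A^1 (free unital algebra) are finitely supported coefficient functions
   word -> K; A is the subset with zero coefficient on the empty word. *)
Definition word := seq nat.
Definition elt (K : fieldType) := word -> K.

Section Alg.
Variable K : fieldType.

Definition finsupp (f : elt K) : Prop :=
  exists s : seq word, forall w, f w != 0 -> w \in s.

Definition inA1 (f : elt K) : Prop := finsupp f.
Definition inA (f : elt K) : Prop := finsupp f /\ f [::] = 0.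
Definition inAdeg (n : nat) (f : elt K) : Prop :=
  finsupp f /\ forall w, f w != 0 -> size w = n.

Definition zeroE : elt K := fun _ => 0.
Definition addE (f g : elt K) : elt K := fun w => f w + g w.
Definition scaleE (c : K) (f : elt K) : elt K := fun w => c * f w.
Definition mon (u : word) : elt K := fun w => (w == u)%:R.
Definition mulE (f g : elt K) : elt K :=
  fun w => \sum_(i < (size w).+1) f (take i w) * g (drop i w).

(* The derivation D with D(x_i) = x_{i+1}: coefficient of w in D f is the sum,
   over positions q with w[q] = j+1, of the coefficient of f at w with w[q] := j. *)
Definition Dder (f : elt K) : elt K :=
  fun w => \sum_(q < size w)
             (if (0 < nth 0%N w q)%N then f (set_nth 0%N w q (nth 0%N w q).-1) else 0).

Inductive span (P : elt K -> Prop) : elt K -> Prop :=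
| span_gen a : P a -> span P a
| span0 : span P zeroE
| spanD a b : span P a -> span P b -> span P (addE a b)
| spanZ c a : span P a -> span P (scaleE c a).

Inductive ideal (P : elt K -> Prop) : elt K -> Prop :=
| ideal_gen a : P a -> ideal P a
| ideal0 : ideal P zeroE
| idealD a b : ideal P a -> ideal P b -> ideal P (addE a b)
| idealZ c a : ideal P a -> ideal P (scaleE c a)
| idealMl u a : inA u -> ideal P a -> ideal P (mulE u a)
| idealMr a v : inA v -> ideal P a -> ideal P (mulE a v).

Definition Wset (k n : nat) (a : elt K) : Prop :=
  exists (t : nat) (w : word),
    [/\ size w = n, all (fun i => (i < k)%N) w & a = iter t Dder (mon w)].

Definition Nk (k : nat) : nat := (100 ^ (k ^ 2))%N.
Definition Mk (k : nat) : nat := (100 ^ ((k.-1) ^ 2))%N.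

Definition Ik (k : nat) : elt K -> Prop := ideal (Wset k (2 * Nk k)%N).

(* letter at 1-indexed position q *)
Definition letter (s : word) (q : nat) : nat := nth 0%N s q.-1.

Definition Zk (k : nat) (a : elt K) : Prop :=
  (exists (c : K) (s : word) (p q : nat),
     [/\ size s = (Nk k).-1, (p < q <= k)%N,
         letter s (3 ^ p * Mk k)%N = letter s (3 ^ q * Mk k)%N
       & a = scaleE c (mon s)])
  \/
  (exists (c : K) (s1 s2 : word) (p q l1 l2 : nat),
     [/\ size s1 = (Nk k).-1 /\ size s2 = (Nk k).-1, (p < q <= k)%N, (l2 < l1)%N,
         ([/\ letter s1 (3 ^ p * Mk k)%N = l1, letter s1 (3 ^ q * Mk k)%N = l2,
             letter s2 (3 ^ p * Mk k)%N = l2 & letter s2 (3 ^ q * Mk k)%N = l1] /\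
         (forall r, (1 <= r <= (Nk k).-1)%N -> r != (3 ^ p * Mk k)%N ->
            r != (3 ^ q * Mk k)%N -> letter s1 r = letter s2 r))
       & a = scaleE c (addE (mon s1) (mon s2))]).

Definition Bk (k : nat) : elt K -> Prop :=
  span (fun a => exists (m : nat) (u z v : elt K),
          [/\ inAdeg (m * Nk k)%N u, Zk k z, inA1 v & a = mulE (mulE u z) v]).

End Alg.

From Pilot Require Import Defs.
From mathcomp Require Import all_boot all_order all_algebra all_fingroup.
From mathcomp Require Import zify.
From Stdlib Require Import FunctionalExtensionality.
Set Implicit Arguments. Unset Strict Implicit. Unset Printing Implicit Defensive.
Import GRing.Theory.
Local Open Scope ring_scope.

(* Write N = N_k and call "marks" the positions m_p = 3^p 100^((k-1)^2),
   0 <= p <= k, of a block of N - 1 letters.  Since B_k is a subspace, it is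
   enough to show that u g v lies in B_k for every generator g of I_k and all
   monomials u, v: multiplying an element of I_k by elements of A reduces to
   multiplying by monomials (elements of A are finitely supported), and
   associativity turns u (u' g v') v into (u u') g (v' v).

   A generator is g = D^t(w) with |w| = 2N and letters in {x_0, ..., x_(k-1)}.
   Pad u by L <= N letters of w to a multiple of N; the next N - 1 letters of w
   form a block.  Among the k + 1 marks of this block, two positions i, j carry
   the same letter of w (pigeonhole).  The span of the words s of length 2N with
   s_i = s_j together with the sums s + s^(ij) (s^(ij): s with positions i, j
   swapped) contains w and is stable under D, because incrementing a letter
   commutes with the swap up to transposing i and j.  Finally, for each spanning
   element the part lying in the block is an element of Z_k, so its two-sided
   multiple is one of the spanning elements of B_k. *)

Section FreeAlgebra.
Variable K : fieldType.
Implicit Types (f g h : elt K) (u v w : word).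

Lemma eltE f g : (forall w, f w = g w) -> f = g.
Proof. exact: functional_extensionality. Qed.

Lemma sum_shift (G : nat -> K) i n : (i <= n)%N ->
  \sum_(j < (n - i).+1) G (j + i)%N = \sum_(i <= j < n.+1) G j.
Proof. by move=> le_in; rewrite -[in RHS](add0n i) big_addn subSn // big_mkord. Qed.

(* Associativity of the concatenation product: both sides are the sum of
   f(w[0,i)) g(w[i,j)) h(w[j,n)) over all cut points i <= j <= n = |w|. *)
Lemma mulEA f g h : mulE f (mulE g h) = mulE (mulE f g) h.
Proof.
apply: eltE => w; rewrite /mulE; set n := size w.
pose F i j := f (take i w) * g (take (j - i) (drop i w)) * h (drop j w).
have triangle i m : \sum_(j < m) (if (i <= j)%N then F i j else 0) = \sum_(i <= j < m) F i j.
  by rewrite big_geq_mkord [RHS]big_mkcond.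
transitivity (\sum_(i < n.+1) \sum_(j < n.+1) if (i <= j)%N then F i j else 0).
  apply: eq_bigr => i _; rewrite mulr_sumr size_drop -/n triangle.
  rewrite -sum_shift; last by rewrite -ltnS.
  by apply: eq_bigr => j _; rewrite /F addnK drop_drop mulrA.
rewrite exchange_big; apply: eq_bigr => j _.
have le_jn : (j <= n)%N by rewrite -ltnS.
rewrite size_takel // mulr_suml.
rewrite (big_ord_widen n.+1 (fun i : nat =>
  f (take i (take j w)) * g (drop i (take j w)) * h (drop j w)) (ltn_ord j)).
rewrite [RHS]big_mkcond; apply: eq_bigr => i _; rewrite ltnS; case: ifP => // le_ij.
by rewrite /F take_takel // take_drop subnK.
Qed.

Lemma mulEDl f g h : mulE (addE f g) h = addE (mulE f h) (mulE g h).
Proof. by apply: eltE => w; rewrite /mulE /addE -big_split; apply: eq_bigr => i _; rewrite mulrDl. Qed.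

Lemma mulEDr f g h : mulE h (addE f g) = addE (mulE h f) (mulE h g).
Proof. by apply: eltE => w; rewrite /mulE /addE -big_split; apply: eq_bigr => i _; rewrite mulrDr. Qed.

Lemma mulEZl c f h : mulE (scaleE c f) h = scaleE c (mulE f h).
Proof. by apply: eltE => w; rewrite /mulE /scaleE mulr_sumr; apply: eq_bigr => i _; rewrite mulrA. Qed.

Lemma mulEZr c f h : mulE h (scaleE c f) = scaleE c (mulE h f).
Proof. by apply: eltE => w; rewrite /mulE /scaleE mulr_sumr; apply: eq_bigr => i _; rewrite mulrCA. Qed.

Lemma mul0E h : mulE (zeroE K) h = zeroE K.
Proof. by apply: eltE => w; apply: big1 => i _; rewrite mul0r. Qed.

Lemma mulE0 h : mulE h (zeroE K) = zeroE K.
Proof. by apply: eltE => w; apply: big1 => i _; rewrite mulr0. Qed.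

Lemma scale1E f : scaleE 1 f = f.
Proof. by apply: eltE => w; rewrite /scaleE mul1r. Qed.

Lemma addEC f g : addE f g = addE g f.
Proof. by apply: eltE => w; rewrite /addE addrC. Qed.

Lemma mulE_monl u g w :
  mulE (mon K u) g w = if take (size u) w == u then g (drop (size u) w) else 0.
Proof.
rewrite /mulE /mon; case: (leqP (size u) (size w)) => [le_uw | lt_wu].
  rewrite (bigD1 (Ordinal (le_uw : (size u < (size w).+1)%N))) //= big1 ?addr0.
    by case: eqP; rewrite ?mul1r ?mul0r.
  move=> i /eqP ne_iu; case: eqP; rewrite ?mul0r // => eq_iu.
  by case: ne_iu; apply: val_inj; rewrite /= -eq_iu size_takel // -ltnS.
rewrite take_oversize ?(ltnW lt_wu) //; case: eqP => [eq_wu|_].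
  by move: lt_wu; rewrite eq_wu ltnn.
apply: big1 => i _; case: eqP; rewrite ?mul0r // => eq_iu.
by move: lt_wu; rewrite -eq_iu size_take_min; lia.
Qed.

Lemma mon_cat u v : mulE (mon K u) (mon K v) = mon K (u ++ v).
Proof.
apply: eltE => w; rewrite mulE_monl /mon.
have [le_uw | lt_wu] := leqP (size u) (size w).
  by rewrite -{3}(cat_take_drop (size u) w) eqseq_cat ?size_takel //; case: eqP.
rewrite take_oversize ?(ltnW lt_wu) //; case: eqP => [eq_wu | _].
  by move: lt_wu; rewrite eq_wu ltnn.
by case: eqP => // eq_w; move: lt_wu; rewrite eq_w size_cat; lia.
Qed.

Lemma mon_nill f : mulE (mon K [::]) f = f.
Proof. by apply: eltE => w; rewrite mulE_monl take0 drop0. Qed.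

Lemma mon_nilr f : mulE f (mon K [::]) = f.
Proof.
apply: eltE => w; rewrite /mulE big_ord_recr /= drop_size take_size /mon eqxx mulr1.
rewrite big1 ?add0r // => i _; case: eqP; rewrite ?mulr0 // => /(congr1 size).
by rewrite size_drop /= => /eqP; rewrite subn_eq0 leqNgt ltn_ord.
Qed.

Definition sumE (S : seq word) (c : word -> K) (F : word -> elt K) : elt K :=
  fun w => \sum_(x <- S) c x * F x w.

Lemma mulE_sumL S c F h :
  mulE (sumE S c F) h = sumE S c (fun x => mulE (F x) h).
Proof.
apply: eltE => w; rewrite /mulE /sumE.
under eq_bigr do rewrite mulr_suml.
rewrite exchange_big; apply: eq_bigr => x _; rewrite mulr_sumr.
by apply: eq_bigr => i _; rewrite mulrA.
Qed.

Lemma mulE_sumR S c F h :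
  mulE h (sumE S c F) = sumE S c (fun x => mulE h (F x)).
Proof.
apply: eltE => w; rewrite /mulE /sumE.
under eq_bigr do rewrite mulr_sumr.
rewrite exchange_big; apply: eq_bigr => x _; rewrite mulr_sumr.
by apply: eq_bigr => i _; rewrite mulrCA.
Qed.

Lemma finsupp_decomp f : finsupp f -> exists S, f = sumE S f (mon K).
Proof.
case=> S supp_f; exists (undup S); apply: eltE => w; rewrite /sumE /mon.
have [wS | wNS] := boolP (w \in S).
  rewrite (bigD1_seq w) ?mem_undup ?undup_uniq //= eqxx mulr1 big1 ?addr0 //.
  by move=> x /negbTE ne_xw; rewrite eq_sym ne_xw mulr0.
have -> : f w = 0 by apply/eqP; apply: contraNT wNS => /supp_f.
rewrite big1_seq // => x /andP [_ xS]; case: eqP => [eq_wx|_]; last by rewrite mulr0.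
by move: xS; rewrite mem_undup -eq_wx (negbTE wNS).
Qed.

Lemma span_sum (P : elt K -> Prop) (I : Type) (r : seq I) (Q : pred I) (F : I -> elt K) :
  (forall x, Q x -> Defs.span P (F x)) ->
  Defs.span P (fun w => \sum_(x <- r | Q x) F x w).
Proof.
move=> spanF; elim: r => [|x r IH].
  by rewrite (_ : (fun w => _) = zeroE K); [exact: Defs.span0 | apply: eltE => w; rewrite big_nil].
rewrite (_ : (fun w => _) = if Q x then addE (F x) (fun w => \sum_(y <- r | Q y) F y w)
                            else fun w => \sum_(y <- r | Q y) F y w).
  by case: ifP => // Qx; apply: Defs.spanD => //; apply: spanF.
by case: ifP => Qx; apply: eltE => w; rewrite big_cons Qx.
Qed.

Lemma span_sumE (P : elt K -> Prop) S c F :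
  (forall x, Defs.span P (F x)) -> Defs.span P (sumE S c F).
Proof.
move=> spanF; apply: (@span_sum P _ S xpredT (fun x => scaleE (c x) (F x))) => x _.
exact: Defs.spanZ.
Qed.

Definition sandwich u f v : elt K := mulE (mulE (mon K u) f) (mon K v).

Lemma sandwich_mull u x g v : sandwich u (mulE (mon K x) g) v = sandwich (u ++ x) g v.
Proof. by rewrite /sandwich mulEA mon_cat. Qed.

Lemma sandwich_mulr u g x v : sandwich u (mulE g (mon K x)) v = sandwich u g (x ++ v).
Proof. by rewrite /sandwich -mon_cat !mulEA. Qed.

Lemma sandwich_sum u S c F v :
  sandwich u (sumE S c F) v = sumE S c (fun x => sandwich u (F x) v).
Proof. by rewrite /sandwich mulE_sumR mulE_sumL. Qed.

Lemma sandwich_nil f : sandwich [::] f [::] = f.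
Proof. by rewrite /sandwich mon_nill mon_nilr. Qed.

Lemma sandwich0 u v : sandwich u (zeroE K) v = zeroE K.
Proof. by rewrite /sandwich mulE0 mul0E. Qed.

Lemma sandwichD u f g v : sandwich u (addE f g) v = addE (sandwich u f v) (sandwich u g v).
Proof. by rewrite /sandwich mulEDr mulEDl. Qed.

Lemma sandwichZ u c f v : sandwich u (scaleE c f) v = scaleE c (sandwich u f v).
Proof. by rewrite /sandwich mulEZr mulEZl. Qed.

Lemma sandwich_span (P T : elt K -> Prop) u v f :
  (forall g, P g -> Defs.span T (sandwich u g v)) ->
  Defs.span P f -> Defs.span T (sandwich u f v).
Proof.
move=> genT; elim=> {f} [g /genT // | | g h _ IHg _ IHh | c g _ IHg].
- by rewrite sandwich0; apply: Defs.span0.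
- by rewrite sandwichD; apply: Defs.spanD.
- by rewrite sandwichZ; apply: Defs.spanZ.
Qed.

Lemma ideal_sandwich (P T : elt K -> Prop) f :
  (forall g u v, P g -> Defs.span T (sandwich u g v)) ->
  Defs.ideal P f -> forall u v, Defs.span T (sandwich u f v).
Proof.
move=> genT; elim=> {f} [g Pg | | g h _ IHg _ IHh | c g _ IHg | x g [supp_x _] _ IHg
                       | g x [supp_x _] _ IHg] u v.
- exact: genT.
- by rewrite sandwich0; apply: Defs.span0.
- by rewrite sandwichD; apply: Defs.spanD.
- by rewrite sandwichZ; apply: Defs.spanZ.
- have [S ->] := finsupp_decomp supp_x.
  rewrite mulE_sumL sandwich_sum; apply: span_sumE => y.
  by rewrite sandwich_mull; apply: IHg.
- have [S ->] := finsupp_decomp supp_x.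
  rewrite mulE_sumR sandwich_sum; apply: span_sumE => y.
  by rewrite sandwich_mulr; apply: IHg.
Qed.

End FreeAlgebra.

Definition swap (s : word) (i j : nat) : word :=
  set_nth 0%N (set_nth 0%N s i (nth 0%N s j)) j (nth 0%N s i).

Lemma size_swap s i j : (i < size s)%N -> (j < size s)%N -> size (swap s i j) = size s.
Proof. by move=> lt_is lt_js; rewrite !size_set_nth; lia. Qed.

Lemma nth_swap s i j r : nth 0%N (swap s i j) r =
  if r == j then nth 0%N s i else if r == i then nth 0%N s j else nth 0%N s r.
Proof. by rewrite /swap nth_set_nth /= nth_set_nth. Qed.

Lemma size_incr s q : (q < size s)%N -> size (incr_nth s q) = size s.
Proof. by rewrite size_incr_nth => ->. Qed.

Lemma swap_id s i j : (i < size s)%N -> (j < size s)%N ->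
  nth 0%N s i = nth 0%N s j -> swap s i j = s.
Proof.
move=> lt_is lt_js eq_ij; apply: (@eq_from_nth _ 0%N) => [|r _]; first exact: size_swap.
by rewrite nth_swap; case: eqP => [->|_] //; case: eqP => [->|].
Qed.

Lemma incr_swap s i j q : (i < size s)%N -> (j < size s)%N -> (q < size s)%N ->
  incr_nth (swap s i j) q = swap (incr_nth s (if q == i then j else if q == j then i else q)) i j.
Proof.
move=> lt_is lt_js lt_qs; apply: (@eq_from_nth _ 0%N).
  by rewrite size_incr ?size_swap ?size_incr //; case: ifP => //; case: ifP.
move=> r _; rewrite (nth_incr_nth _ q r) !nth_swap !(nth_incr_nth s).
by do !case: ifP; move=> *; lia.
Qed.

Lemma eq_incr_nth s w q : (q < size s)%N -> size w = size s ->
  (w == incr_nth s q) = (0 < nth 0%N w q)%N && (set_nth 0%N w q (nth 0%N w q).-1 == s).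
Proof.
move=> lt_qs eq_ws; apply/eqP/andP => [-> | [w_q_gt0 /eqP <-]].
  rewrite nth_incr_nth eqxx /=; split => //; apply/eqP/(@eq_from_nth _ 0%N).
    by rewrite size_set_nth size_incr //; lia.
  move=> r _; rewrite nth_set_nth /= (nth_incr_nth s q r).
  by case: (eqVneq r q) => [->|ne_rq] //; rewrite eq_sym (negbTE ne_rq).
apply: (@eq_from_nth _ 0%N).
  by rewrite size_incr ?size_set_nth eq_ws; lia.
move=> r _; rewrite (nth_incr_nth _ q r) nth_set_nth /=.
by case: (eqVneq r q) => [->|ne_rq]; rewrite ?eqxx ?add1n ?prednK // eq_sym (negbTE ne_rq).
Qed.

Lemma nth_cat_size (u w : word) r : nth 0%N (u ++ w) (size u + r) = nth 0%N w r.
Proof. by rewrite nth_cat ltnNge leq_addr /= addKn. Qed.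

Lemma set_nth_cat_size (u w : word) r y :
  set_nth 0%N (u ++ w) (size u + r) y = u ++ set_nth 0%N w r y.
Proof. by elim: u => //= a u ->. Qed.

Lemma set_nth_catl (x v : word) r y : (r < size x)%N ->
  set_nth 0%N (x ++ v) r y = set_nth 0%N x r y ++ v.
Proof. by elim: x r => // a x IH [|r] //= lt_rx; rewrite IH. Qed.

Lemma swap_cat (u x v : word) i j : (i < size x)%N -> (j < size x)%N ->
  swap (u ++ x ++ v) (size u + i) (size u + j) = u ++ swap x i j ++ v.
Proof.
move=> lt_ix lt_jx; rewrite /swap !nth_cat_size !set_nth_cat_size !nth_cat lt_ix lt_jx.
by rewrite set_nth_catl // set_nth_catl // size_set_nth; lia.
Qed.

Section Derivation.
Variable K : fieldType.
Implicit Types (f g : elt K) (s w : word).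

Lemma DderD f g : Dder (addE f g) = addE (Dder f) (Dder g).
Proof.
apply: eltE => w; rewrite /Dder /addE -big_split /=; apply: eq_bigr => q _.
by case: ifP => _; rewrite ?addr0.
Qed.

Lemma DderZ c f : Dder (scaleE c f) = scaleE c (Dder f).
Proof.
apply: eltE => w; rewrite /Dder /scaleE mulr_sumr; apply: eq_bigr => q _.
by case: ifP => _; rewrite ?mulr0.
Qed.

Lemma Dder0 : Dder (zeroE K) = zeroE K.
Proof. by apply: eltE => w; apply: big1 => q _; case: ifP. Qed.

Lemma Dder_mon s : Dder (mon K s) = fun w => \sum_(q < size s) mon K (incr_nth s q) w.
Proof.
apply: eltE => w; rewrite /Dder /mon.
have [eq_ws | ne_ws] := eqVneq (size w) (size s); last first.
  rewrite big1 => [|q _]; last first.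
    case: ifP => // _; case: eqP => // eq_w.
    by case/eqP: ne_ws; rewrite -eq_w size_set_nth; have := ltn_ord q; lia.
  apply/esym/big1 => q _; case: eqP => // eq_w.
  by case/eqP: ne_ws; rewrite eq_w size_incr.
rewrite eq_ws; apply: eq_bigr => q _.
by rewrite eq_incr_nth ?eq_ws //; case: ifP => //; case: eqP.
Qed.
End Derivation.

(* Generators of the D-stable subspace attached to two positions i <> j of
   words of length n: monomials whose letters at i and j coincide, and sums
   s + swap s i j of a monomial and its image under the transposition. *)
Definition sym_pair (K : fieldType) (i j n : nat) (a : elt K) : Prop :=
  exists2 s : word, size s = n &
    (nth 0%N s i = nth 0%N s j /\ a = mon K s) \/ a = addE (mon K s) (mon K (swap s i j)).

Section SwapSymmetric.
Variables (K : fieldType) (i j n : nat).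
Hypotheses (lt_in : (i < n)%N) (lt_jn : (j < n)%N) (ne_ij : i != j).
Local Notation Sym := (Defs.span (@sym_pair K i j n)).

Let I := Ordinal lt_in.
Let J := Ordinal lt_jn.

Lemma sym_pair_eq s : size s = n -> nth 0%N s i = nth 0%N s j -> Sym (mon K s).
Proof. by move=> size_s eq_ij; apply: Defs.span_gen; exists s => //; left. Qed.

Lemma sym_pair_swap s : size s = n -> Sym (addE (mon K s) (mon K (swap s i j))).
Proof. by move=> size_s; apply: Defs.span_gen; exists s => //; right. Qed.

(* D(s) for s_i = s_j: the increments at positions other than i, j keep
   s_i = s_j, and the increment at j is the swap of the increment at i. *)
Lemma Dder_sym_eq s : size s = n -> nth 0%N s i = nth 0%N s j -> Sym (Dder (mon K s)).
Proof.
move=> size_s eq_ij; rewrite Dder_mon size_s.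
have ne_JI : J != I by rewrite -(inj_eq val_inj) /= eq_sym.
rewrite (_ : (fun w => _) = addE (addE (mon K (incr_nth s i)) (mon K (incr_nth s j)))
          (fun w => \sum_(q < n | (q != I) && (q != J)) mon K (incr_nth s q) w)); last first.
  by apply: eltE => w; rewrite (bigD1 I) //= (bigD1 J) //= /addE addrA.
have lt_is : (i < size s)%N by rewrite size_s.
have lt_js : (j < size s)%N by rewrite size_s.
apply: Defs.spanD; last first.
  apply: span_sum => q /andP [ne_qI ne_qJ]; apply: sym_pair_eq; first by rewrite size_incr ?size_s.
  rewrite !nth_incr_nth eq_ij; congr (_ + _)%N.
  by move: ne_qI ne_qJ; rewrite -!(inj_eq val_inj) /= => /negbTE -> /negbTE ->.
have -> : incr_nth s j = swap (incr_nth s i) i j.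
  rewrite -{1}(swap_id lt_is lt_js eq_ij) incr_swap // eqxx.
  by rewrite eq_sym (negbTE ne_ij).
by apply: sym_pair_swap; rewrite size_incr ?size_s.
Qed.

Lemma tperm_val (q : 'I_n) :
  val (tperm I J q) = if val q == i then j else if val q == j then i else val q.
Proof.
case: tpermP => [->|->|ne_qI ne_qJ] /=; rewrite ?eqxx // ?(eq_sym j) ?(negbTE ne_ij) //.
have /negbTE -> : val q != i by apply/eqP => eq_qi; apply: ne_qI; exact: val_inj.
have /negbTE -> // : val q != j by apply/eqP => eq_qj; apply: ne_qJ; exact: val_inj.
Qed.

(* D(s + swap s) = sum over q of (s incremented at q) + its swap: reindex the
   increments of swap s by the transposition of i and j. *)
Lemma Dder_sym_swap s : size s = n -> Sym (Dder (addE (mon K s) (mon K (swap s i j)))).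
Proof.
move=> size_s; have lt_is : (i < size s)%N by rewrite size_s.
have lt_js : (j < size s)%N by rewrite size_s.
rewrite DderD !Dder_mon size_swap // size_s.
rewrite [X in addE _ X](_ : _ = fun w => \sum_(q < n) mon K (swap (incr_nth s q) i j) w).
  rewrite (_ : addE _ _ = fun w => \sum_(q < n)
             addE (mon K (incr_nth s q)) (mon K (swap (incr_nth s q) i j)) w).
    by apply: span_sum => q _; apply: sym_pair_swap; rewrite size_incr ?size_s.
  by apply: eltE => w; rewrite /addE big_split.
apply: eltE => w; rewrite (reindex_inj (@perm_inj _ (tperm I J))) /=.
apply: eq_bigr => q _; rewrite incr_swap ?size_s // -tperm_val.
by rewrite tpermK.
Qed.

Lemma Dder_sym a : Sym a -> Sym (Dder a).
Proof.
elim=> {a} [_ [s size_s [[eq_ij ->] | ->]] | | a b _ IHa _ IHb | c a _ IHa].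
- exact: Dder_sym_eq.
- exact: Dder_sym_swap.
- by rewrite Dder0; apply: Defs.span0.
- by rewrite DderD; apply: Defs.spanD.
- by rewrite DderZ; apply: Defs.spanZ.
Qed.

Lemma iter_Dder_sym t a : Sym a -> Sym (iter t (@Dder K) a).
Proof. by move=> Sa; elim: t => [|t IH] //=; apply: Dder_sym. Qed.

End SwapSymmetric.

Lemma pigeonhole (f : nat -> nat) k : (forall p, (p <= k)%N -> (f p < k)%N) ->
  exists p q, (p < q <= k)%N /\ f p = f q.
Proof.
move=> f_lt; pose g (p : 'I_k.+1) : 'I_k := Ordinal (f_lt p (ltn_ord p)).
have /injectivePn [p [q ne_pq eq_g]] : ~~ injectiveb g.
  by apply/injectiveP => /leq_card; rewrite !card_ord ltnn.
have eq_f : f p = f q by move: eq_g => /(congr1 val).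
have [lt_pq | lt_qp | eq_pq] := ltngtP p q; last by case/eqP: ne_pq; apply: val_inj.
  by exists p, q; rewrite lt_pq -ltnS ltn_ord.
by exists q, p; rewrite lt_qp -ltnS ltn_ord.
Qed.

Lemma block_offset a N : (0 < N)%N -> exists m L, (a + L = m * N)%N /\ (L <= N)%N.
Proof.
move=> N_gt0; exists (a %/ N).+1, (N - a %% N)%N.
have := divn_eq a N; have := ltn_pmod a N_gt0; split; lia.
Qed.

Local Notation mark k p := (3 ^ p * Mk k)%N.

Lemma Nk_gt0 k : (0 < Nk k)%N. Proof. by rewrite expn_gt0. Qed.
Lemma Mk_gt0 k : (0 < Mk k)%N. Proof. by rewrite expn_gt0. Qed.

Lemma mark_bounds k p : (1 <= k)%N -> (p <= k)%N -> (0 < mark k p < Nk k)%N.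
Proof.
case: k => [//|k] _ le_pk; rewrite muln_gt0 expn_gt0 Mk_gt0 /=.
apply: (@leq_ltn_trans (mark k.+1 k.+1)); first by rewrite leq_mul2r leq_pexp2l ?orbT.
rewrite /Nk /Mk /= -[(k.+1 ^ 2)%N](_ : (k ^ 2 + k.*2.+1 = k.+1 ^ 2)%N); last first.
  by rewrite -!mulnn; lia.
rewrite expnD mulnC ltn_pmul2l ?expn_gt0 //.
by apply: (@leq_trans (100 ^ k.+1)); rewrite ?ltn_exp2r ?leq_pexp2l //; lia.
Qed.

Lemma mark_lt k p q : (p < q)%N -> (mark k p < mark k q)%N.
Proof. by move=> lt_pq; rewrite ltn_pmul2r ?Mk_gt0 // ltn_exp2l. Qed.

Lemma Zk_eq (K : fieldType) k c x p q :
  size x = (Nk k).-1 -> (p < q <= k)%N -> letter x (mark k p) = letter x (mark k q) ->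
  Zk k (scaleE c (mon K x)).
Proof. by move=> size_x le_pqk eq_pq; left; exists c, x, p, q. Qed.

Lemma Zk_swap (K : fieldType) k c x p q : (1 <= k)%N ->
  size x = (Nk k).-1 -> (p < q <= k)%N -> letter x (mark k p) != letter x (mark k q) ->
  Zk k (scaleE c (addE (mon K x) (mon K (swap x (mark k p).-1 (mark k q).-1)))).
Proof.
move=> k_gt0 size_x /andP [lt_pq le_qk] ne_pq; set y := swap x _ _.
have [/andP [mp_gt0 mp_lt] /andP [mq_gt0 mq_lt]] :=
  conj (mark_bounds k_gt0 (ltnW (leq_trans lt_pq le_qk))) (mark_bounds k_gt0 le_qk).
have mpq_lt := mark_lt k lt_pq.
have size_y : size y = (Nk k).-1 by rewrite size_swap // size_x; lia.
have letter_y r : (0 < r)%N -> letter y r = if r == mark k q then letter x (mark k p)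
    else if r == mark k p then letter x (mark k q) else letter x r.
  move=> r_gt0; have eq_pred m : (0 < m)%N -> (r.-1 == m.-1) = (r == m).
    by move=> m_gt0; apply/eqP/eqP; lia.
  by rewrite /letter nth_swap !eq_pred.
have same r : (1 <= r <= (Nk k).-1)%N -> r != mark k p -> r != mark k q ->
    letter x r = letter y r.
  by move=> /andP [r_gt0 _] /negbTE ne_rp /negbTE ne_rq; rewrite letter_y // ne_rp ne_rq.
have lp : letter y (mark k p) = letter x (mark k q).
  by rewrite letter_y // eqxx; case: eqP => //; lia.
have lq : letter y (mark k q) = letter x (mark k p) by rewrite letter_y // eqxx.
case: (ltngtP (letter x (mark k p)) (letter x (mark k q))) => [lt_l | gt_l | /eqP];
  last by rewrite (negbTE ne_pq).
- rewrite addEC; right; exists c, y, x, p, q, (letter x (mark k q)), (letter x (mark k p)).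
  split; rewrite ?lt_pq ?le_qk //; split => [|r r_range ne_rp ne_rq]; first by split.
  by rewrite same.
- right; exists c, x, y, p, q, (letter x (mark k p)), (letter x (mark k q)).
  by split; rewrite ?lt_pq ?le_qk //; split => //; split.
Qed.

Lemma Bk_sandwich (K : fieldType) k m (u v : word) (z : elt K) :
  size u = (m * Nk k)%N -> Zk k z -> Bk k (sandwich u z v).
Proof.
move=> size_u Zz; have supp_mon (x : word) : finsupp (mon K x).
  by exists [:: x] => w; rewrite /mon mem_seq1; case: (eqVneq w x) => //= _; rewrite eqxx.
apply: Defs.span_gen; exists m, (mon K u), z, (mon K v); split => //; last exact: supp_mon.
split=> [|w]; first exact: supp_mon.
by rewrite /mon; case: (eqVneq w u) => [-> //|_] /=; rewrite eqxx.
Qed.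

Lemma Bk_sym_pair (K : fieldType) k m L (a b : word) p q (g : elt K) :
  (1 <= k)%N -> (size a + L = m * Nk k)%N -> (L + (Nk k).-1 <= 2 * Nk k)%N ->
  (p < q <= k)%N ->
  sym_pair (L + (mark k p).-1) (L + (mark k q).-1) (2 * Nk k) g -> Bk k (sandwich a g b).
Proof.
move=> k_gt0 aL LN le_pqk [s size_s gen_s]; set N1 := (Nk k).-1 in LN *.
have /andP [lt_pq le_qk] := le_pqk.
have /andP [mp_gt0 mp_lt] := mark_bounds k_gt0 (ltnW (leq_trans lt_pq le_qk)).
have /andP [mq_gt0 mq_lt] := mark_bounds k_gt0 le_qk.
set u := take L s; set x := take N1 (drop L s); set v := drop (L + N1) s.
have s_cut : s = u ++ x ++ v by rewrite /u /x /v addnC -drop_drop !cat_take_drop.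
have size_u : size u = L by rewrite size_takel // size_s; lia.
have size_x : size x = N1 by rewrite size_takel // size_drop size_s; lia.
have size_au : size (a ++ u) = (m * Nk k)%N by rewrite size_cat size_u.
have nth_s r : (0 < r < Nk k)%N -> nth 0%N s (L + r.-1) = letter x r.
  by move=> /andP [r_gt0 r_lt]; rewrite s_cut -size_u nth_cat_size nth_cat size_x; case: ifP => //; lia.
have mon_s y : mon K (u ++ y ++ v) = mulE (mulE (mon K u) (mon K y)) (mon K v).
  by rewrite -!mon_cat mulEA.
have Bk_eq : nth 0%N s (L + (mark k p).-1) = nth 0%N s (L + (mark k q).-1) ->
    Bk k (sandwich a (mon K s) b).
  rewrite !nth_s ?mp_gt0 ?mq_gt0 // => eq_letters.
  rewrite s_cut mon_s sandwich_mulr sandwich_mull -(scale1E (mon K x)).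
  exact: (Bk_sandwich _ size_au (Zk_eq 1 size_x le_pqk eq_letters)).
case: gen_s => [[eq_s ->] | ->]; first exact: Bk_eq.
have [eq_s | ne_s] := eqVneq (nth 0%N s (L + (mark k p).-1)) (nth 0%N s (L + (mark k q).-1)).
  rewrite swap_id ?size_s ?eq_s; try lia.
  by rewrite sandwichD; apply: Defs.spanD; apply: Bk_eq.
rewrite s_cut -size_u swap_cat ?size_x; try lia.
rewrite !mon_s -mulEDl -mulEDr sandwich_mulr sandwich_mull -[addE (mon K x) _]scale1E.
rewrite !nth_s ?mp_gt0 ?mq_gt0 // in ne_s.
exact: (Bk_sandwich _ size_au (Zk_swap 1 k_gt0 size_x le_pqk ne_s)).
Qed.

(* Each generator D^t(w) of I_k, multiplied by monomials on both sides, lies in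
   B_k: place the block after the shortest padding of the left factor, find two
   marked positions of w carrying the same letter (pigeonhole), and use that
   the span of the corresponding symmetric generators contains w and is D-stable. *)
Lemma Bk_Wset (K : fieldType) k (g : elt K) :
  (1 <= k)%N -> Wset k (2 * Nk k) g -> forall a b, Bk k (sandwich a g b).
Proof.
move=> k_gt0 [t [w [size_w letters_w ->]]] a b.
have [m [L [aL le_LN]]] := block_offset (size a) (Nk_gt0 k).
have lt_letter p : (p <= k)%N -> (nth 0%N w (L + (mark k p).-1) < k)%N.
  move=> le_pk; have /andP [_ mp_lt] := mark_bounds k_gt0 le_pk.
  by apply: (allP letters_w); apply: mem_nth; rewrite size_w; lia.
have [p [q [le_pqk eq_pq]]] := pigeonhole lt_letter.
have /andP [lt_pq le_qk] := le_pqk.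
have /andP [mp_gt0 _] := mark_bounds k_gt0 (ltnW (leq_trans lt_pq le_qk)).
have /andP [mq_gt0 mq_lt] := mark_bounds k_gt0 le_qk.
have mpq_lt := mark_lt k lt_pq.
have LN : (L + (Nk k).-1 <= 2 * Nk k)%N by lia.
apply: (sandwich_span (fun g => @Bk_sym_pair K k m L a b p q g k_gt0 aL LN le_pqk)).
by apply: iter_Dder_sym; try lia; apply: sym_pair_eq.
Qed.

Theorem mainTheorem4 (K : fieldType) (k : nat) :
  (1 <= k)%N -> forall a : elt K, Ik k a -> Bk k a.
Proof.
move=> k_gt0 a Ia; rewrite -(sandwich_nil a).
exact: (ideal_sandwich (fun g u v Wg => Bk_Wset k_gt0 Wg u v) Ia).
Qed.
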